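(* Let $\mathcal X,\mathcal Y$ be finite, $q:\mathcal X\times\mathcal Y\to\mathbb R$, $P_{X_1}$ a pmf on $\mathcal X$, and $W,V$ conditional pmfs on $\mathcal Y$ given $\mathcal X$. For conditional pmfs $P_{Y\hat Y|X_1}$ (on $\mathcal Y\times\mathcal Y$ given $\mathcal X$) and $P_{X_2|X_1\hat Y}$ (on $\mathcal X$ given $\mathcal X\times\mathcal Y$), let $\mathbb E[q(X_2,Y)]=\sum_{x_1,x_2,y,\hat y}q(x_2,y)P_{X_1}(x_1)P_{Y\hat Y|X_1}(y,\hat y|x_1)P_{X_2|X_1\hat Y}(x_2|\hat y,x_1)$. Let $\mathcal A$ be the set of $P_{Y\hat Y|X_1}$ with $P_{Y|X_1}=W$ and $P_{\hat Y|X_1}=V$, and $\mathcal B$ the set of $P_{X_2|X_1\hat Y}$ such that, under the joint law $P_{X_1}(x_1)V(\hat y|x_1)P_{X_2|X_1\hat Y}(x_2|\hat y,x_1)$, $P_{\hat YX_2}=P_{\hat YX_1}$. Then $$\max_{P_{Y\hat Y|X_1}\in\mathcal A}\ \min_{P_{X_2|X_1\hat Y}\in\mathcal B}\mathbb E[q(X_2,Y)]=\min_{P_{X_2|X_1\hat Y}\in\mathcal B}\ \max_{P_{Y\hat Y|X_1}\in\mathcal A}\mathbb E[q(X_2,Y)].$$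
   Context: $P_{Y|X_1}$ and $P_{\hat Y|X_1}$ denote the two marginal conditionals of $P_{Y\hat Y|X_1}$. The joint law of $(X_1,Y,\hat Y,X_2)$ is $P_{X_1}P_{Y\hat Y|X_1}P_{X_2|X_1\hat Y}$, so that $X_2-(X_1,\hat Y)-Y$ is a Markov chain. *)

From HB Require Import structures.
From mathcomp Require Import all_boot all_order all_algebra.
From mathcomp Require Import all_classical all_reals.
Set Implicit Arguments. Unset Strict Implicit. Unset Printing Implicit Defensive.
Import Order.TTheory GRing.Theory Num.Theory.
Local Open Scope ring_scope.
Local Open Scope classical_set_scope.

Section Defs.
Variables (R : realType) (X Y : finType).

Definition is_pmf (P : X -> R) : Prop :=
  (forall x, 0 <= P x) /\ \sum_(x : X) P x = 1.

(* conditional pmf on Y given X : W x1 y = W(y|x1) *)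
Definition is_cond_pmf (W : X -> Y -> R) : Prop :=
  forall x, (forall y, 0 <= W x y) /\ \sum_(y : Y) W x y = 1.

(* P_{Y Yhat | X1} : P x1 y yh = P(y, yh | x1) *)
Definition is_cond_pmf2 (P : X -> Y -> Y -> R) : Prop :=
  forall x, (forall y yh, 0 <= P x y yh) /\ \sum_(y : Y) \sum_(yh : Y) P x y yh = 1.

(* P_{X2 | X1 Yhat} : K x1 yh x2 = P(x2 | yh, x1) *)
Definition is_cond_pmfX (K : X -> Y -> X -> R) : Prop :=
  forall x1 yh, (forall x2, 0 <= K x1 yh x2) /\ \sum_(x2 : X) K x1 yh x2 = 1.

Definition expect_q (q : X -> Y -> R) (PX1 : X -> R)
  (P : X -> Y -> Y -> R) (K : X -> Y -> X -> R) : R :=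
  \sum_(x1 : X) \sum_(x2 : X) \sum_(y : Y) \sum_(yh : Y)
     q x2 y * PX1 x1 * P x1 y yh * K x1 yh x2.

Definition setA (W V : X -> Y -> R) : set (X -> Y -> Y -> R) :=
  [set P | is_cond_pmf2 P /\
     (forall x1 y, \sum_(yh : Y) P x1 y yh = W x1 y) /\
     (forall x1 yh, \sum_(y : Y) P x1 y yh = V x1 yh)].

Definition setB (PX1 : X -> R) (V : X -> Y -> R) : set (X -> Y -> X -> R) :=
  [set K | is_cond_pmfX K /\
     (forall yh x, \sum_(x1 : X) PX1 x1 * V x1 yh * K x1 yh x = PX1 x * V x yh)].

End Defs.

From HB Require Import structures.
From mathcomp Require Import all_boot all_order all_algebra.
From mathcomp Require Import all_classical all_reals.
From mathcomp Require Import ring lra.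
Set Implicit Arguments. Unset Strict Implicit. Unset Printing Implicit Defensive.
Import Order.TTheory GRing.Theory Num.Theory.
Local Open Scope ring_scope.

(* Both [A] and [B] are bounded polytopes [{x >= 0 | C x = c}] of flattened
   conditional laws, and [E] is bilinear in [(P, K)].  A bilinear game on two
   nonempty bounded polytopes has a saddle point: by Farkas' lemma (proved by
   Fourier-Motzkin elimination) either the linear programs [max_P E P K] and
   [min_K E P K] have primal-dual solutions without duality gap, which form a
   saddle point, or there is an infeasibility certificate, whose value is
   shown to be nonnegative using boundedness and nonemptiness.  Playing against
   a one-point polytope, the same result shows that every inner optimum is
   attained, and then max-min and min-max both equal the saddle value. *)

(** * Farkas' lemma *)

Section Sums.
Variable R : realFieldType.

Lemma sum_delta (I : finType) (i : I) (f : I -> R) :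
  \sum_k (k == i)%:R * f k = f i.
Proof.
rewrite (bigD1 i) //= eqxx mul1r big1 ?addr0 // => k /negbTE ->.
by rewrite mul0r.
Qed.

Lemma sum_mul_delta (I : finType) (i : I) (f : I -> R) :
  \sum_k f k * (k == i)%:R = f i.
Proof. by rewrite -[RHS](sum_delta i); apply: eq_bigr => k _; rewrite mulrC. Qed.

Lemma sum_mul_delta_sym (I : finType) (i : I) (f : I -> R) :
  \sum_k f k * (i == k)%:R = f i.
Proof. by rewrite -[RHS](sum_mul_delta i); apply: eq_bigr => k _; rewrite eq_sym. Qed.

Lemma sum_mulr0 (I : finType) (f : I -> R) : \sum_i f i * 0 = 0.
Proof. by apply: big1 => i _; rewrite mulr0. Qed.

Lemma sum_mulrN (I : finType) (f g : I -> R) :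
  \sum_i f i * - g i = - \sum_i f i * g i.
Proof. by rewrite -sumrN; apply: eq_bigr => i _; rewrite mulrN. Qed.

Lemma sum_mulBl (I : finType) (f g a : I -> R) :
  \sum_i (f i - g i) * a i = \sum_i f i * a i - \sum_i g i * a i.
Proof. by rewrite -sumrB; apply: eq_bigr => i _; rewrite mulrBl. Qed.

Lemma sum_unit (f : unit -> R) : \sum_u f u = f tt.
Proof. by rewrite (big_pred1 tt) // => -[]. Qed.

Lemma sum_mul_sum_swap (I J : finType) (a : I -> R) (b : J -> R) (F : I -> J -> R) :
  \sum_i a i * \sum_j b j * F i j = \sum_j b j * \sum_i a i * F i j.
Proof.
under eq_bigr do rewrite big_distrr.
rewrite exchange_big; apply: eq_bigr => j _; rewrite big_distrr.
by apply: eq_bigr => i _ /=; ring.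
Qed.

Lemma sum_mul_sum_assoc (I J : finType) (w : I -> R) (a : I -> J -> R) (x : J -> R) :
  \sum_t (\sum_i w i * a i t) * x t = \sum_i w i * \sum_t a i t * x t.
Proof.
under eq_bigr do rewrite mulr_suml; rewrite exchange_big.
by apply: eq_bigr => i _; rewrite big_distrr; apply: eq_bigr => t _ /=; rewrite mulrA.
Qed.

End Sums.

Section FourierMotzkin.
Variables (R : realFieldType) (T : finType).

Definition feasible (I : finType) (a : I -> T -> R) (b : I -> R) :=
  exists x : T -> R, forall i, \sum_t x t * a i t <= b i.

Definition farkas_certificate (I : finType) (a : I -> T -> R) (b : I -> R) :=
  exists y : I -> R, [/\ forall i, 0 <= y i,
    forall t, \sum_i y i * a i t = 0 & \sum_i y i * b i < 0].

Lemma fourier_motzkin_scalar (I : finType) (al e : I -> R) :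
  (forall i, al i = 0 -> 0 <= e i) ->
  (forall p m, 0 < al p -> al m < 0 -> al m * e p <= al p * e m) ->
  exists z, forall i, al i * z <= e i.
Proof.
move=> e0 epm.
pose z0 := \big[Order.min/0]_(p | 0 < al p) (e p / al p).
exists (\big[Order.max/z0]_(m | al m < 0) (e m / al m)) => i.
case: (ltgtP (al i) 0) => [ali|ali|ali0]; last by rewrite ali0 mul0r e0.
- by rewrite mulrC -ler_ndivrMr //; apply: le_bigmax_cond.
- rewrite mulrC -ler_pdivlMr //; apply: bigmax_le => [|m alm].
    exact: bigmin_le_cond.
  by rewrite ler_pdivlMr // mulrAC ler_ndivrMr // mulrC [_ * al i]mulrC epm.
Qed.

Definition set_at (x : T -> R) (j : T) (z : R) (t : T) := if t == j then z else x t.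

Lemma sum_set_at (c x : T -> R) j z :
  \sum_t set_at x j z t * c t = \sum_t set_at x j 0 t * c t + z * c j.
Proof.
rewrite (bigD1 j) // [in RHS](bigD1 j) //= /set_at !eqxx mul0r add0r addrC.
congr (_ + _).
by apply: eq_bigr => t /negbTE ->.
Qed.

Lemma set_at_id (x : T -> R) j : set_at x j (x j) = x.
Proof. by apply/funext => t; rewrite /set_at; case: eqP => [->|]. Qed.

Section Elimination.
Variables (I : finType) (a : I -> T -> R) (b : I -> R) (j : T).

(* Fourier-Motzkin elimination of [j]: keep the rows without [j], and combine
   every row with a positive coefficient at [j] with every row with a negative
   one so that [j] cancels. *)
Definition fm_weight (r : I + I * I) (i : I) : R :=
  match r with
  | inl k => if a k j == 0 then (i == k)%:R else 0
  | inr (p, m) => if (0 < a p j) && (a m j < 0)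
                  then - a m j * (i == p)%:R + a p j * (i == m)%:R else 0
  end.

Definition fm_row r t := \sum_i fm_weight r i * a i t.
Definition fm_rhs r := \sum_i fm_weight r i * b i.

Lemma fm_weight_ge0 r i : 0 <= fm_weight r i.
Proof.
case: r => [k|[p m]] /=; first by case: ifP; rewrite ?ler0n.
case: ifP => // /andP [apj amj].
by apply: addr_ge0; apply: mulr_ge0; rewrite ?ler0n // ?oppr_ge0 ltW.
Qed.

Lemma fm_weight_inl k (f : I -> R) :
  a k j = 0 -> \sum_i fm_weight (inl k) i * f i = f k.
Proof. by move=> /= ->; rewrite eqxx sum_delta. Qed.

Lemma fm_weight_inr p m (f : I -> R) : 0 < a p j -> a m j < 0 ->
  \sum_i fm_weight (inr (p, m)) i * f i = - a m j * f p + a p j * f m.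
Proof.
move=> /= -> ->; under eq_bigr do rewrite mulrDl -!mulrA.
by rewrite big_split /= -!big_distrr /= !sum_delta.
Qed.

Lemma fm_row_eliminated r : fm_row r j = 0.
Proof.
case: r => [k|[p m]]; rewrite /fm_row.
  have [akj|akj] := eqVneq (a k j) 0; first by rewrite fm_weight_inl.
  by rewrite big1 // => i _ /=; rewrite (negbTE akj) mul0r.
have [/andP [apj amj]|pm] := boolP ((0 < a p j) && (a m j < 0)).
  by rewrite fm_weight_inr //; ring.
by rewrite big1 // => i _ /=; rewrite (negbTE pm) mul0r.
Qed.

Lemma fm_certificate_lift :
  farkas_certificate fm_row fm_rhs -> farkas_certificate a b.
Proof.
move=> [y [y0 ya yb]]; exists (fun i => \sum_r y r * fm_weight r i); split.
- by move=> i; apply: sumr_ge0 => r _; apply: mulr_ge0 (y0 r) (fm_weight_ge0 _ _).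
- by move=> t; rewrite sum_mul_sum_assoc; exact: ya.
- by rewrite sum_mul_sum_assoc; exact: yb.
Qed.

Lemma fm_feasible_lift : feasible fm_row fm_rhs -> feasible a b.
Proof.
move=> [x' x'sol]; pose x0 := set_at x' j 0; pose s i := \sum_t x0 t * a i t.
have comb r : \sum_i fm_weight r i * s i <= fm_rhs r.
  have := x'sol r; rewrite -{1}(set_at_id x' j) sum_set_at fm_row_eliminated.
  by rewrite mulr0 addr0 sum_mul_sum_swap.
have [z zsol] : exists z, forall i, a i j * z <= b i - s i.
  apply: fourier_motzkin_scalar => [i aij|p m apj amj].
    by have := comb (inl i); rewrite /fm_rhs !fm_weight_inl // subr_ge0.
  have := comb (inr (p, m)); rewrite /fm_rhs !fm_weight_inr // => ineq.
  rewrite -subr_ge0 (_ : _ - _ = - a m j * b p + a p j * b m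
    - (- a m j * s p + a p j * s m)) ?subr_ge0 //; ring.
exists (set_at x' j z) => i; rewrite sum_set_at -/x0 -/(s i).
by rewrite mulrC -lerBrDl; exact: zsol.
Qed.

End Elimination.

Lemma farkas_zero_rows (I : finType) (a : I -> T -> R) (b : I -> R) :
  (forall i t, a i t = 0) -> feasible a b \/ farkas_certificate a b.
Proof.
move=> a0; have [/existsP [i bi]|] := boolP [exists i, b i < 0].
  right; exists (fun k => (k == i)%:R); split; last by rewrite sum_delta.
  - by move=> k; exact: ler0n.
  - by move=> t; rewrite big1 // => k _; rewrite a0 mulr0.
rewrite negb_exists => /forallP b_ge0; left; exists (fun _ => 0) => i.
by rewrite big1 => [|t _]; [rewrite leNgt b_ge0 | rewrite mul0r].
Qed.

Lemma farkas_support n (S : {set T}) : (#|S| <= n)%N ->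
  forall (I : finType) (a : I -> T -> R) (b : I -> R),
  (forall i t, t \notin S -> a i t = 0) -> feasible a b \/ farkas_certificate a b.
Proof.
elim: n S => [|n IH] S sizeS I a b aS.
  apply: farkas_zero_rows => i t; apply: aS.
  by move: sizeS; rewrite leqn0 cards_eq0 => /eqP ->; rewrite finset.in_set0.
have [S0|[j jS]] := set_0Vmem S.
  by apply: farkas_zero_rows => i t; apply: aS; rewrite S0 finset.in_set0.
have sizeSj : (#|S :\ j| <= n)%N by move: sizeS; rewrite (cardsD1 j S) jS.
have aSj r t : t \notin S :\ j -> fm_row a j r t = 0.
  rewrite finset.in_setD1 negb_and negbK => /orP [/eqP ->|tS].
    exact: fm_row_eliminated.
  by rewrite /fm_row big1 // => i _; rewrite aS // mulr0.
have [/fm_feasible_lift|/fm_certificate_lift] := IH _ sizeSj _ _ (fm_rhs a b j) aSj.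
  by left.
by right.
Qed.

Theorem farkas_lemma (I : finType) (a : I -> T -> R) (b : I -> R) :
  feasible a b \/ farkas_certificate a b.
Proof.
apply: (@farkas_support #|T| [set: T]%SET) => [|i t]; first exact: max_card.
by rewrite finset.in_setT.
Qed.

End FourierMotzkin.

(** * Saddle points of bilinear games on polytopes *)

Section Polytope.
Variables (R : realFieldType) (I T : finType).

Definition polytope (C : I -> T -> R) (c : I -> R) (x : T -> R) :=
  (forall t, 0 <= x t) /\ (forall i, \sum_t x t * C i t = c i).

Definition trivial_recession_cone (C : I -> T -> R) :=
  forall x : T -> R, (forall t, 0 <= x t) ->
  (forall i, \sum_t x t * C i t = 0) -> forall t, x t = 0.

Lemma polytope_sum_mul C c x (g : I -> R) : polytope C c x ->
  \sum_i g i * c i = \sum_t x t * \sum_i g i * C i t.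
Proof.
by move=> [_ xC]; rewrite sum_mul_sum_swap; apply: eq_bigr => i _; rewrite xC.
Qed.

End Polytope.

Section Payoff.
Variables (R : realFieldType) (TP TK : finType) (M : TP -> TK -> R).

Definition payoff (P : TP -> R) (K : TK -> R) := \sum_t P t * \sum_k K k * M t k.

Lemma payoffE P K : payoff P K = \sum_k K k * \sum_t P t * M t k.
Proof. exact: sum_mul_sum_swap. Qed.

End Payoff.

Section Saddle.
Variables (R : realFieldType) (TP TK IC ID : finType).
Variables (C : IC -> TP -> R) (c : IC -> R) (D : ID -> TK -> R) (d : ID -> R).
Variable M : TP -> TK -> R.

Lemma saddle_of_dual_solution P K (u : IC -> R) (w : ID -> R) :
  (forall t, \sum_k K k * M t k <= \sum_i u i * C i t) ->
  (forall k, \sum_j w j * D j k <= \sum_t P t * M t k) ->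
  \sum_i u i * c i <= \sum_j w j * d j ->
  forall P' K', polytope C c P' -> polytope D d K' ->
  payoff M P' K <= payoff M P K'.
Proof.
move=> KM_le wD_le uc_le P' K' P'A K'B.
rewrite (polytope_sum_mul u P'A) (polytope_sum_mul w K'B) in uc_le.
rewrite [payoff M P K']payoffE; apply: le_trans (le_trans _ uc_le) _.
  by apply: ler_sum => t _; rewrite ler_wpM2l //; case: P'A.
by apply: ler_sum => k _; rewrite ler_wpM2l //; case: K'B.
Qed.

Local Notation var := (TP + TK + IC + ID)%type.
Local Notation vP t := (inl (inl (inl t))).
Local Notation vK k := (inl (inl (inr k))).
Local Notation vu i := (inl (inr i)).
Local Notation vw j := (inr j).

Definition linform (fP : TP -> R) (fK : TK -> R) (fu : IC -> R) (fw : ID -> R)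
    (v : var) : R :=
  match v with
  | vP t => fP t | vK k => fK k | vu i => fu i | vw j => fw j
  end.

Lemma sum_linform (x : var -> R) fP fK fu fw :
  \sum_v x v * linform fP fK fu fw v =
    \sum_t x (vP t) * fP t + \sum_k x (vK k) * fK k
    + \sum_i x (vu i) * fu i + \sum_j x (vw j) * fw j.
Proof. by rewrite !big_sumType. Qed.

Local Notation row := (TP + TK + IC + IC + ID + ID + TP + TK + unit)%type.
Local Notation rP t := (inl (inl (inl (inl (inl (inl (inl (inl t)))))))).
Local Notation rK k := (inl (inl (inl (inl (inl (inl (inl (inr k)))))))).
Local Notation rCle i := (inl (inl (inl (inl (inl (inl (inr i))))))).
Local Notation rCge i := (inl (inl (inl (inl (inl (inr i)))))).
Local Notation rDle j := (inl (inl (inl (inl (inr j))))).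
Local Notation rDge j := (inl (inl (inl (inr j)))).
Local Notation rMK t := (inl (inl (inr t))).
Local Notation rMP k := (inl (inr k)).
Local Notation rgap := (inr tt).

(* The rows say [P >= 0], [K >= 0], [C P = c], [D K = d], [M K <= u C],
   [w D <= P M] and [u.c <= w.d]: a solution [(P, K, u, w)] pairs [P] and [K]
   with dual solutions [u] of [max_P payoff P K] and [w] of [min_K payoff P K]
   leaving no duality gap. *)
Definition saddle_row (r : row) : var -> R :=
  match r with
  | rP t' => linform (fun t => - (t == t')%:R) (fun=> 0) (fun=> 0) (fun=> 0)
  | rK k' => linform (fun=> 0) (fun k => - (k == k')%:R) (fun=> 0) (fun=> 0)
  | rCle i => linform (C i) (fun=> 0) (fun=> 0) (fun=> 0)
  | rCge i => linform (fun t => - C i t) (fun=> 0) (fun=> 0) (fun=> 0)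
  | rDle j => linform (fun=> 0) (D j) (fun=> 0) (fun=> 0)
  | rDge j => linform (fun=> 0) (fun k => - D j k) (fun=> 0) (fun=> 0)
  | rMK t => linform (fun=> 0) (M t) (fun i => - C i t) (fun=> 0)
  | rMP k => linform (fun t => - M t k) (fun=> 0) (fun=> 0) (fun j => D j k)
  | rgap => linform (fun=> 0) (fun=> 0) c (fun j => - d j)
  end.

Definition saddle_rhs (r : row) : R :=
  match r with
  | rCle i => c i | rCge i => - c i | rDle j => d j | rDge j => - d j
  | _ => 0
  end.

Let saddle_simp := (sum_linform, sum_mulr0, mulr0, sum_mulrN, mulrN, addr0, add0r).

Lemma saddle_of_feasible_system : feasible saddle_row saddle_rhs ->
  exists2 P, polytope C c P & exists2 K, polytope D d K &
    forall P' K', polytope C c P' -> polytope D d K' -> payoff M P' K <= payoff M P K'.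
Proof.
move=> [x xsol].
pose P t := x (vP t); pose K k := x (vK k).
have PA : polytope C c P.
  split=> [t|i].
    by have /= := xsol (rP t); rewrite !saddle_simp sum_mul_delta oppr_le0.
  have /= := xsol (rCle i); have /= := xsol (rCge i).
  by rewrite !saddle_simp lerN2 => Cge Cle; apply/eqP; rewrite eq_le Cle Cge.
have KB : polytope D d K.
  split=> [k|j].
    by have /= := xsol (rK k); rewrite !saddle_simp sum_mul_delta oppr_le0.
  have /= := xsol (rDle j); have /= := xsol (rDge j).
  by rewrite !saddle_simp lerN2 => Dge Dle; apply/eqP; rewrite eq_le Dle Dge.
exists P => //; exists K => //.
apply: (@saddle_of_dual_solution _ _ (fun i => x (vu i)) (fun j => x (vw j))).
- by move=> t; have /= := xsol (rMK t); rewrite !saddle_simp subr_le0.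
- by move=> k; have /= := xsol (rMP k); rewrite !saddle_simp addrC subr_le0.
- by have /= := xsol rgap; rewrite !saddle_simp subr_le0.
Qed.

Hypotheses (A0 : exists P, polytope C c P) (B0 : exists K, polytope D d K).
Hypotheses (boundedA : trivial_recession_cone C) (boundedB : trivial_recession_cone D).

Lemma saddle_certificate_value_ge0 (sP al : TP -> R) (sK be : TK -> R)
    (g : IC -> R) (h : ID -> R) (mu : R) :
  (forall t, 0 <= sP t) -> (forall k, 0 <= sK k) ->
  (forall t, 0 <= al t) -> (forall k, 0 <= be k) -> 0 <= mu ->
  (forall t, sP t = \sum_i g i * C i t - \sum_k be k * M t k) ->
  (forall k, sK k = \sum_j h j * D j k + \sum_t al t * M t k) ->
  (forall i, \sum_t al t * C i t = mu * c i) ->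
  (forall j, \sum_k be k * D j k = mu * d j) ->
  0 <= \sum_i g i * c i + \sum_j h j * d j.
Proof.
move=> sP0 sK0 al0 be0 mu0 sPE sKE alC beD.
have [mu_eq0|mu_neq0] := eqVneq mu 0.
  have al_eq0 : forall t, al t = 0.
    by apply: boundedA => // i; rewrite alC mu_eq0 mul0r.
  have be_eq0 : forall k, be k = 0.
    by apply: boundedB => // j; rewrite beD mu_eq0 mul0r.
  have gC t : \sum_i g i * C i t = sP t.
    rewrite sPE (_ : \sum_k be k * M t k = 0) ?subr0 //.
    by apply: big1 => k _; rewrite be_eq0 mul0r.
  have hD k : \sum_j h j * D j k = sK k.
    rewrite sKE (_ : \sum_t al t * M t k = 0) ?addr0 //.
    by apply: big1 => t _; rewrite al_eq0 mul0r.
  have [P0 P0A] := A0; have [K0 K0B] := B0.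
  rewrite (polytope_sum_mul g P0A) (polytope_sum_mul h K0B).
  apply: addr_ge0; apply: sumr_ge0 => x _.
    by rewrite gC; apply: mulr_ge0 => //; case: P0A.
  by rewrite hD; apply: mulr_ge0 => //; case: K0B.
(* The cross terms cancel: [al.sP + be.sK = mu (g.c + h.d)]. *)
set Q := \sum_t al t * \sum_k be k * M t k.
have alsP : \sum_t al t * sP t = mu * \sum_i g i * c i - Q.
  transitivity (\sum_t al t * \sum_i g i * C i t - Q).
    by rewrite -sumrB; apply: eq_bigr => t _; rewrite sPE mulrBr.
  rewrite sum_mul_sum_swap big_distrr; congr (_ - _); apply: eq_bigr => i _ /=.
  by rewrite alC mulrCA.
have besK : \sum_k be k * sK k = mu * \sum_j h j * d j + Q.
  transitivity (\sum_k be k * \sum_j h j * D j k + \sum_k be k * \sum_t al t * M t k).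
    by rewrite -big_split; apply: eq_bigr => k _; rewrite sKE mulrDr.
  rewrite sum_mul_sum_swap [X in _ + X]sum_mul_sum_swap -/Q big_distrr.
  by congr (_ + _); apply: eq_bigr => j _ /=; rewrite beD mulrCA.
have : 0 <= \sum_t al t * sP t + \sum_k be k * sK k.
  by apply: addr_ge0; apply: sumr_ge0 => x _; apply: mulr_ge0.
rewrite alsP besK (_ : _ - Q + _ = mu * (\sum_i g i * c i + \sum_j h j * d j)).
  by rewrite pmulr_rge0 // lt_def mu_neq0.
by ring.
Qed.

Lemma saddle_system_no_certificate : ~ farkas_certificate saddle_row saddle_rhs.
Proof.
move=> [y [y0 ycol yb]].
have sPE t : y (rP t) =
    \sum_i (y (rCle i) - y (rCge i)) * C i t - \sum_k y (rMP k) * M t k.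
  have := ycol (vP t); rewrite !big_sumType sum_unit /= !saddle_simp.
  by rewrite sum_mul_delta_sym sum_mulBl; lra.
have sKE k : y (rK k) =
    \sum_j (y (rDle j) - y (rDge j)) * D j k + \sum_t y (rMK t) * M t k.
  have := ycol (vK k); rewrite !big_sumType sum_unit /= !saddle_simp.
  by rewrite sum_mul_delta_sym sum_mulBl; lra.
have alC i : \sum_t y (rMK t) * C i t = y rgap * c i.
  by have := ycol (vu i); rewrite !big_sumType sum_unit /= !saddle_simp; lra.
have beD j : \sum_k y (rMP k) * D j k = y rgap * d j.
  by have := ycol (vw j); rewrite !big_sumType sum_unit /= !saddle_simp; lra.
have := saddle_certificate_value_ge0 (fun t => y0 (rP t)) (fun k => y0 (rK k))
  (fun t => y0 (rMK t)) (fun k => y0 (rMP k)) (y0 rgap) sPE sKE alC beD.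
by move: yb; rewrite !big_sumType sum_unit /= !saddle_simp !sum_mulBl; lra.
Qed.

Theorem polytope_saddle_point :
  exists2 P, polytope C c P & exists2 K, polytope D d K &
    forall P' K', polytope C c P' -> polytope D d K' -> payoff M P' K <= payoff M P K'.
Proof.
case: (farkas_lemma saddle_row saddle_rhs) => [|/saddle_system_no_certificate []].
exact: saddle_of_feasible_system.
Qed.

End Saddle.

Section Attainment.
Variables (R : realFieldType) (TP TK IC ID : finType).
Variables (C : IC -> TP -> R) (c : IC -> R) (D : ID -> TK -> R) (d : ID -> R).
Variable M : TP -> TK -> R.

(* The one-point polytope: a game against it is the optimization of a linear
   form. *)
Definition point_row (_ _ : unit) : R := 1.
Definition point_rhs (_ : unit) : R := 1.

Lemma point_polytopeE (x : unit -> R) : polytope point_row point_rhs x -> x tt = 1.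
Proof. by move=> [_ /(_ tt)]; rewrite sum_unit mulr1. Qed.

Lemma point_polytope_nonempty : exists x, polytope point_row point_rhs x.
Proof. by exists (fun=> 1); split=> // i; rewrite sum_unit mulr1. Qed.

Lemma point_trivial_recession_cone : trivial_recession_cone point_row.
Proof. by move=> x _ /(_ tt) + []; rewrite sum_unit mulr1. Qed.

Lemma payoff_point_l (m : TK -> R) (p : unit -> R) K :
  p tt = 1 -> payoff (fun _ => m) p K = \sum_k K k * m k.
Proof. by rewrite /payoff sum_unit => ->; rewrite mul1r. Qed.

Lemma payoff_point_r (m : TP -> R) P (k : unit -> R) :
  k tt = 1 -> payoff (fun t _ => m t) P k = \sum_t P t * m t.
Proof. by move=> k1; apply: eq_bigr => t _; rewrite sum_unit k1 mul1r. Qed.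

Lemma polytope_min_attained : (exists K, polytope D d K) -> trivial_recession_cone D ->
  forall P, exists2 K, polytope D d K &
    forall K', polytope D d K' -> payoff M P K <= payoff M P K'.
Proof.
move=> B0 boundedB P.
have [p pA [K KB saddle]] := polytope_saddle_point (fun _ k => \sum_t P t * M t k)
  point_polytope_nonempty B0 point_trivial_recession_cone boundedB.
exists K => // K' K'B; have := saddle p K' pA K'B.
by rewrite !payoff_point_l ?(point_polytopeE pA) // !payoffE.
Qed.

Lemma polytope_max_attained : (exists P, polytope C c P) -> trivial_recession_cone C ->
  forall K, exists2 P, polytope C c P &
    forall P', polytope C c P' -> payoff M P' K <= payoff M P K.
Proof.
move=> A0 boundedA K.
have [P PA [k kB saddle]] := polytope_saddle_point (fun t _ => \sum_k K k * M t k)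
  A0 point_polytope_nonempty boundedA point_trivial_recession_cone.
exists P => // P' P'A; have := saddle P' k P'A kB.
by rewrite !payoff_point_r ?(point_polytopeE kB).
Qed.

End Attainment.

(** * Minimax from a saddle point *)

Local Open Scope classical_set_scope.

Section SupInf.
Variable R : realType.

Lemma sup_eq_max (S : set R) m : S m -> (forall s, S s -> s <= m) -> sup S = m.
Proof.
move=> Sm ubm; apply/eqP; rewrite eq_le ge_sup //=; last by exists m.
by rewrite ub_le_sup //; exists m.
Qed.

Lemma inf_eq_min (S : set R) m : S m -> (forall s, S s -> m <= s) -> inf S = m.
Proof.
move=> Sm lbm; apply/eqP; rewrite eq_le lb_le_inf ?andbT //; last by exists m.
by rewrite ge_inf //; exists m.
Qed.

End SupInf.

Section Minimax.
Variables (R : realType) (TA TB : Type) (E : TA -> TB -> R) (A : set TA) (B : set TB).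
Variables (Ps : TA) (Ks : TB).
Hypotheses (Ps_in : A Ps) (Ks_in : B Ks).
Hypothesis saddle : forall P K, A P -> B K -> E P Ks <= E Ps K.
Hypothesis min_attained :
  forall P, A P -> exists2 K, B K & forall K', B K' -> E P K <= E P K'.
Hypothesis max_attained :
  forall K, B K -> exists2 P, A P & forall P', A P' -> E P' K <= E P K.

Local Notation minB P := (inf [set E P K | K in B]).
Local Notation maxA K := (sup [set E P K | P in A]).

Lemma minB_attained P K : B K -> (forall K', B K' -> E P K <= E P K') -> minB P = E P K.
Proof.
by move=> KB Kmin; apply: inf_eq_min => [|_ [K' K'B <-]]; [exists K|exact: Kmin].
Qed.

Lemma maxA_attained P K : A P -> (forall P', A P' -> E P' K <= E P K) -> maxA K = E P K.
Proof.
by move=> PA Pmax; apply: sup_eq_max => [|_ [P' P'A <-]]; [exists P|exact: Pmax].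
Qed.

Lemma minB_le_value P : A P -> minB P <= E Ps Ks.
Proof.
move=> PA; have [K KB Kmin] := min_attained PA.
by rewrite (minB_attained KB Kmin); apply: le_trans (Kmin _ Ks_in) (saddle PA Ks_in).
Qed.

Lemma value_le_maxA K : B K -> E Ps Ks <= maxA K.
Proof.
move=> KB; have [P PA Pmax] := max_attained KB.
by rewrite (maxA_attained PA Pmax); apply: le_trans (saddle Ps_in KB) (Pmax _ Ps_in).
Qed.

Lemma minB_saddle : minB Ps = E Ps Ks.
Proof. by apply: minB_attained => // K KB; apply: saddle. Qed.

Lemma maxA_saddle : maxA Ks = E Ps Ks.
Proof. by apply: maxA_attained => // P PA; apply: saddle. Qed.

Theorem minimax_of_saddle :
  [/\ exists2 P, A P & (forall P', A P' -> minB P' <= minB P),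
      exists2 K, B K & (forall K', B K' -> maxA K <= maxA K') &
      sup [set minB P | P in A] = inf [set maxA K | K in B]].
Proof.
split.
- by exists Ps => // P PA; rewrite minB_saddle minB_le_value.
- by exists Ks => // K KB; rewrite maxA_saddle value_le_maxA.
have -> : sup [set minB P | P in A] = E Ps Ks.
  apply: sup_eq_max => [|_ [P PA <-]]; last exact: minB_le_value.
  by exists Ps; last exact: minB_saddle.
apply/esym/inf_eq_min => [|_ [K KB <-]]; last exact: value_le_maxA.
by exists Ks; last exact: maxA_saddle.
Qed.

End Minimax.

(** * The channel game *)

Section TripleSums.
Variables (R : realFieldType) (A B C : finType).

Definition uncurry3 (F : A -> B -> C -> R) (t : A * B * C) : R :=
  let: (a, b, c) := t in F a b c.
Definition curry3 (f : A * B * C -> R) (a : A) (b : B) (c : C) : R := f ((a, b), c).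

Lemma curry3K : cancel curry3 uncurry3.
Proof. by move=> f; apply/funext => -[[a b] c]. Qed.

Lemma sum3 (f : A * B * C -> R) : \sum_t f t = \sum_a \sum_b \sum_c f ((a, b), c).
Proof. by rewrite pair_bigA pair_bigA; apply: eq_bigr => -[[a b] c]. Qed.

Lemma sum3_delta12 (F : A -> B -> C -> R) a0 b0 :
  \sum_a \sum_b \sum_c F a b c * ((a == a0)%:R * (b == b0)%:R) = \sum_c F a0 b0 c.
Proof.
transitivity (\sum_a (a == a0)%:R * \sum_b (b == b0)%:R * \sum_c F a b c).
  apply: eq_bigr => a _; rewrite big_distrr; apply: eq_bigr => b _.
  by rewrite !big_distrr; apply: eq_bigr => c _ /=; ring.
by rewrite !sum_delta.
Qed.

Lemma sum3_delta13 (F : A -> B -> C -> R) a0 c0 :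
  \sum_a \sum_b \sum_c F a b c * ((a == a0)%:R * (c == c0)%:R) = \sum_b F a0 b c0.
Proof.
transitivity (\sum_a (a == a0)%:R * \sum_b \sum_c (c == c0)%:R * F a b c).
  apply: eq_bigr => a _; rewrite big_distrr; apply: eq_bigr => b _.
  by rewrite !big_distrr; apply: eq_bigr => c _ /=; ring.
by rewrite sum_delta; apply: eq_bigr => b _; rewrite sum_delta.
Qed.

Lemma sum3_delta23 (F : A -> B -> C -> R) b0 c0 :
  \sum_a \sum_b \sum_c F a b c * ((b == b0)%:R * (c == c0)%:R) = \sum_a F a b0 c0.
Proof.
apply: eq_bigr => a _.
transitivity (\sum_b (b == b0)%:R * \sum_c (c == c0)%:R * F a b c).
  by apply: eq_bigr => b _; rewrite !big_distrr; apply: eq_bigr => c _ /=; ring.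
by rewrite !sum_delta.
Qed.

End TripleSums.

Section ChannelGame.
Variables (R : realType) (X Y : finType) (q : X -> Y -> R) (PX1 : X -> R).
Variables (W V : X -> Y -> R).

(* [P] is flattened to a vector indexed by [(x1, y, yh)] and [K] to one indexed
   by [(x1, yh, x2)].  The rows [inl (x1, y)] and [inr (x1, yh)] of
   [marginal_row] fix the marginals [W] and [V]; the rows [inl (x1, yh)] of
   [test_row] normalize [K] and its rows [inr (yh, x)] say that [P_{Yhat X2}]
   equals [P_{Yhat X1}]. *)
Definition marginal_row (i : X * Y + X * Y) (t : X * Y * Y) : R :=
  let: (x1, y, yh) := t in
  match i with
  | inl (a, b) => (x1 == a)%:R * (y == b)%:R
  | inr (a, b) => (x1 == a)%:R * (yh == b)%:R
  end.

Definition marginal_rhs (i : X * Y + X * Y) : R :=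
  match i with inl (x1, y) => W x1 y | inr (x1, yh) => V x1 yh end.

Definition test_row (j : X * Y + Y * X) (k : X * Y * X) : R :=
  let: (x1, yh, x2) := k in
  match j with
  | inl (a, b) => (x1 == a)%:R * (yh == b)%:R
  | inr (b, c) => PX1 x1 * V x1 yh * ((yh == b)%:R * (x2 == c)%:R)
  end.

Definition test_rhs (j : X * Y + Y * X) : R :=
  match j with inl _ => 1 | inr (yh, x) => PX1 x * V x yh end.

Definition q_matrix (t : X * Y * Y) (k : X * Y * X) : R :=
  let: (x1, y, yh) := t in let: (a, b, x2) := k in
  q x2 y * PX1 x1 * ((a == x1)%:R * (b == yh)%:R).

Lemma marginal_rowE (x : X * Y * Y -> R) a b :
  (\sum_t x t * marginal_row (inl (a, b)) t = \sum_yh x (a, b, yh)) /\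
  (\sum_t x t * marginal_row (inr (a, b)) t = \sum_y x (a, y, b)).
Proof.
by rewrite !sum3 /= (sum3_delta12 (fun x1 y yh => x (x1, y, yh)))
  (sum3_delta13 (fun x1 y yh => x (x1, y, yh))).
Qed.

Lemma test_row_inlE (x : X * Y * X -> R) a b :
  \sum_k x k * test_row (inl (a, b)) k = \sum_x2 x (a, b, x2).
Proof. by rewrite sum3 /= (sum3_delta12 (fun x1 y yh => x (x1, y, yh))). Qed.

Lemma test_row_inrE (x : X * Y * X -> R) b c :
  \sum_k x k * test_row (inr (b, c)) k = \sum_x1 x (x1, b, c) * (PX1 x1 * V x1 b).
Proof.
rewrite sum3 /=; under eq_bigr do under eq_bigr do under eq_bigr do rewrite mulrA.
exact: (sum3_delta23 (fun x1 yh x2 => x (x1, yh, x2) * (PX1 x1 * V x1 yh))).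
Qed.

Lemma q_matrixE (K : X * Y * X -> R) x1 y yh :
  \sum_k K k * q_matrix (x1, y, yh) k = \sum_x2 K (x1, yh, x2) * (q x2 y * PX1 x1).
Proof.
rewrite sum3 /=; under eq_bigr do under eq_bigr do under eq_bigr do rewrite mulrA.
exact: (sum3_delta12 (fun a b x2 => K (a, b, x2) * (q x2 y * PX1 x1))).
Qed.

Hypotheses (W_pmf : is_cond_pmf W) (V_pmf : is_cond_pmf V).

Lemma setA_polytope P :
  setA W V P <-> polytope marginal_row marginal_rhs (uncurry3 P).
Proof.
split=> [[P_pmf [PW PV]]|[P0 PC]].
  split=> [[[x1 y] yh]|[[a b]|[a b]]]; first by case: (P_pmf x1) => ->.
    by rewrite (marginal_rowE _ a b).1 PW.
  by rewrite (marginal_rowE _ a b).2 PV.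
have PW a b : \sum_yh P a b yh = W a b.
  by have := PC (inl (a, b)); rewrite (marginal_rowE _ a b).1.
have PV a b : \sum_y P a y b = V a b.
  by have := PC (inr (a, b)); rewrite (marginal_rowE _ a b).2.
split=> // x1; split=> [y yh|]; first exact: (P0 (x1, y, yh)).
by under eq_bigr do rewrite PW; case: (W_pmf x1).
Qed.

Lemma setB_polytope K : setB PX1 V K <-> polytope test_row test_rhs (uncurry3 K).
Proof.
have testV yh x : \sum_x1 PX1 x1 * V x1 yh * K x1 yh x =
    \sum_k uncurry3 K k * test_row (inr (yh, x)) k.
  by rewrite test_row_inrE; apply: eq_bigr => x1 _; rewrite mulrC.
split=> [[K_pmf KV]|[K0 KD]].
  split=> [[[x1 yh] x2]|[[a b]|[b c]]]; first by case: (K_pmf x1 yh) => ->.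
    by rewrite test_row_inlE; case: (K_pmf a b).
  by rewrite -testV KV.
split=> [x1 yh|yh x]; last by rewrite testV KD.
split=> [x2|]; first exact: (K0 (x1, yh, x2)).
by have := KD (inl (x1, yh)); rewrite test_row_inlE.
Qed.

Lemma expect_qE P K :
  expect_q q PX1 P K = payoff q_matrix (uncurry3 P) (uncurry3 K).
Proof.
rewrite /expect_q /payoff sum3; apply: eq_bigr => x1 _.
rewrite exchange_big; apply: eq_bigr => y _; rewrite exchange_big.
apply: eq_bigr => yh _; rewrite q_matrixE big_distrr.
by apply: eq_bigr => x2 _ /=; ring.
Qed.

Lemma marginal_polytope_nonempty : exists p, polytope marginal_row marginal_rhs p.
Proof.
exists (uncurry3 (fun x y yh => W x y * V x yh)); apply/setA_polytope.
split; last split.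
- move=> x; have [W0 W1] := W_pmf x; have [V0 V1] := V_pmf x.
  split=> [y yh|]; first exact: mulr_ge0.
  by under eq_bigr do rewrite -mulr_sumr V1 mulr1.
- by move=> x y; rewrite -mulr_sumr; case: (V_pmf x) => _ ->; rewrite mulr1.
- by move=> x yh; rewrite -mulr_suml; case: (W_pmf x) => _ ->; rewrite mul1r.
Qed.

Lemma test_polytope_nonempty : exists k, polytope test_row test_rhs k.
Proof.
exists (uncurry3 (fun x1 _ x2 => (x2 == x1)%:R)); apply/setB_polytope; split.
  move=> x1 yh; split=> [x2|]; first exact: ler0n.
  by rewrite -[RHS](sum_delta x1 (fun=> 1)); apply: eq_bigr => x2 _; rewrite mulr1.
by move=> yh x; rewrite sum_mul_delta_sym.
Qed.

Lemma marginal_trivial_recession_cone : trivial_recession_cone marginal_row.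
Proof.
move=> x x0 xC [[a b] c]; have := xC (inl (a, b)).
by rewrite (marginal_rowE _ a b).1 => /psumr_eq0P ->.
Qed.

Lemma test_trivial_recession_cone : trivial_recession_cone test_row.
Proof.
move=> x x0 xD [[a b] c]; have := xD (inl (a, b)).
by rewrite test_row_inlE => /psumr_eq0P ->.
Qed.

Local Notation E := (expect_q q PX1).

Lemma channel_saddle_point : exists2 Ps, setA W V Ps & exists2 Ks, setB PX1 V Ks &
  forall P K, setA W V P -> setB PX1 V K -> E P Ks <= E Ps K.
Proof.
have [p pA [k kB saddle]] := polytope_saddle_point q_matrix
  marginal_polytope_nonempty test_polytope_nonempty
  marginal_trivial_recession_cone test_trivial_recession_cone.
exists (curry3 p); first by apply/setA_polytope; rewrite curry3K.
exists (curry3 k); first by apply/setB_polytope; rewrite curry3K.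
move=> P K /setA_polytope PA /setB_polytope KB.
by rewrite !expect_qE !curry3K; exact: saddle.
Qed.

Lemma channel_min_attained P : exists2 K, setB PX1 V K &
  forall K', setB PX1 V K' -> E P K <= E P K'.
Proof.
have [k kB kmin] := polytope_min_attained q_matrix test_polytope_nonempty
  test_trivial_recession_cone (uncurry3 P).
exists (curry3 k); first by apply/setB_polytope; rewrite curry3K.
by move=> K' /setB_polytope K'B; rewrite !expect_qE curry3K; exact: kmin.
Qed.

Lemma channel_max_attained K : exists2 P, setA W V P &
  forall P', setA W V P' -> E P' K <= E P K.
Proof.
have [p pA pmax] := polytope_max_attained q_matrix marginal_polytope_nonempty
  marginal_trivial_recession_cone (uncurry3 K).
exists (curry3 p); first by apply/setA_polytope; rewrite curry3K.
by move=> P' /setA_polytope P'A; rewrite !expect_qE curry3K; exact: pmax.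
Qed.

End ChannelGame.

Theorem lemma1 (R : realType) (X Y : finType) (q : X -> Y -> R) (PX1 : X -> R)
  (W V : X -> Y -> R) :
  is_pmf PX1 -> is_cond_pmf W -> is_cond_pmf V ->
  let E := expect_q q PX1 in
  let A := setA W V in
  let B := setB PX1 V in
  let minB := fun P => inf [set E P K | K in B] in
  let maxA := fun K => sup [set E P K | P in A] in
  (forall P, A P -> exists2 K, B K & forall K', B K' -> E P K <= E P K') /\
  (forall K, B K -> exists2 P, A P & forall P', A P' -> E P' K <= E P K) /\
  (exists2 P, A P & forall P', A P' -> minB P' <= minB P) /\
  (exists2 K, B K & forall K', B K' -> maxA K <= maxA K') /\
  sup [set minB P | P in A] = inf [set maxA K | K in B].
Proof.
(* [PX1] need not be a pmf: the argument works for any weights. *)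
move=> _ W_pmf V_pmf E A B minB maxA.
have [Ps PsA [Ks KsB saddle]] := channel_saddle_point q PX1 W_pmf V_pmf.
have min_att P (_ : A P) := channel_min_attained q PX1 V P.
have max_att K (_ : B K) := channel_max_attained q PX1 W_pmf V_pmf K.
by have [] := minimax_of_saddle PsA KsB saddle min_att max_att.
Qed.
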